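(* For every $x\in\mathbb{C}^n$, the element $(\mathrm{J}(0,n),x)\in\mathfrak{aff}(n,\mathbb{C})$ is strongly adjoint $c$-real.
   Context: $\mathrm{J}(\lambda,m)$ denotes the $m\times m$ Jordan block with $\lambda$ on the diagonal, $1$ on the superdiagonal and $0$ elsewhere. $\mathrm{Aff}(n,\mathbb{C})$ is the group of pairs $(A,v)$, $A\in\mathrm{GL}(n,\mathbb{C})$, $v\in\mathbb{C}^n$, identified with the matrices $\begin{pmatrix}A&v\\0&1\end{pmatrix}\in\mathrm{GL}(n+1,\mathbb{C})$ (so $(A,v)(B,w)=(AB,Aw+v)$, identity $(I_n,0)$). Its Lie algebra $\mathfrak{aff}(n,\mathbb{C})$ consists of pairs $(X,u)$, $X\in M_n(\mathbb{C})$, $u\in\mathbb{C}^n$, identified with $\begin{pmatrix}X&u\\0&0\end{pmatrix}$. The adjoint action is matrix conjugation: $\mathrm{Ad}_{(A,v)}(X,u)=(AXA^{-1},\,Au-AXA^{-1}v)$. Complex conjugation acts entrywise. An element $Y\in\mathfrak{aff}(n,\mathbb{C})$ is strongly adjoint $c$-real if there exists $h\in\mathrm{Aff}(n,\mathbb{C})$ with $h\overline{h}=(I_n,0)$ and $\mathrm{Ad}_h(Y)=-\overline{Y}$. *)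

(* The complex numbers C are modelled as  R[i] = complex R
   (mathcomp-real-closed) for an arbitrary  R : realType  (every realType is
   isomorphic to the reals, so this is exactly C). *)
From HB Require Import structures.
From mathcomp Require Import all_boot all_order all_algebra.
From mathcomp Require Import reals.
From mathcomp Require Import complex.
Set Implicit Arguments. Unset Strict Implicit. Unset Printing Implicit Defensive.
Import Order.TTheory GRing.Theory Num.Theory.
Local Open Scope ring_scope.
Local Open Scope complex_scope.

Definition jordan_block (R : realType) (lam : R[i]) (m : nat) : 'M[R[i]]_m :=
  \matrix_(a < m, b < m) (if b == a :> nat then lam
                          else if b == a.+1 :> nat then 1 else 0).

Definition conjM (R : realType) (p q : nat) (M : 'M[R[i]]_(p, q)) : 'M[R[i]]_(p, q) :=
  map_mx (fun z => z^*) M.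

(* Elements of Aff(n,C): pairs (A, v) with A invertible; identified with
   block matrices [[A, v],[0, 1]].  Product: (A,v)(B,w) = (AB, Aw + v). *)
Definition aff_mul (R : realType) (n : nat)
  (g h : 'M[R[i]]_n * 'cV[R[i]]_n) : 'M[R[i]]_n * 'cV[R[i]]_n :=
  (g.1 *m h.1, g.1 *m h.2 + g.2).

Definition aff_conj (R : realType) (n : nat)
  (g : 'M[R[i]]_n * 'cV[R[i]]_n) : 'M[R[i]]_n * 'cV[R[i]]_n :=
  (conjM g.1, conjM g.2).

Definition aff_one (R : realType) (n : nat) : 'M[R[i]]_n * 'cV[R[i]]_n :=
  (1%:M, 0).

Definition aff_Ad (R : realType) (n : nat)
  (g : 'M[R[i]]_n * 'cV[R[i]]_n) (Y : 'M[R[i]]_n * 'cV[R[i]]_n)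
  : 'M[R[i]]_n * 'cV[R[i]]_n :=
  let AXAi := g.1 *m Y.1 *m invmx g.1 in
  (AXAi, g.1 *m Y.2 - AXAi *m g.2).

Definition strongly_adjoint_creal (R : realType) (n : nat)
  (Y : 'M[R[i]]_n * 'cV[R[i]]_n) : Prop :=
  exists h : 'M[R[i]]_n * 'cV[R[i]]_n,
    [/\ h.1 \in unitmx,
        aff_mul h (aff_conj h) = aff_one R n &
        aff_Ad h Y = (- conjM Y.1, - conjM Y.2)].

From HB Require Import structures.
From mathcomp Require Import all_boot all_order all_algebra.
From mathcomp Require Import reals.
From mathcomp Require Import complex.
Set Implicit Arguments. Unset Strict Implicit. Unset Printing Implicit Defensive.
Import Order.TTheory GRing.Theory Num.Theory.
Local Open Scope ring_scope.
Local Open Scope complex_scope.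

(* Conjugation by the alternating sign matrix S = diag((-1)^k) sends J = J(0,n)
   to -J, and so does conjugation by A = c S for any c with |c| = 1.  Taking
   h = (A, v), the Lie algebra condition Ad_h(J, x) = -(J, conj x) becomes
   J v = y with y = -(conj x + A x).  As J J^T is the identity off the last
   coordinate, v = J^T y solves it once the last coordinate of y vanishes,
   which is what the phase c is chosen for.  The group condition h conj(h) = 1
   then reduces to A conj(y) = y, which holds because A conj(A) = 1. *)

Section ConjugateMatrix.
Variable R : realType.

Lemma conjM_mul m n p (A : 'M[R[i]]_(m, n)) (B : 'M[R[i]]_(n, p)) :
  conjM (A *m B) = conjM A *m conjM B.
Proof. exact: (map_mxM conjc). Qed.

Lemma conjMD m n (A B : 'M[R[i]]_(m, n)) : conjM (A + B) = conjM A + conjM B.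
Proof. exact: (map_mxD conjc). Qed.

Lemma conjMN m n (A : 'M[R[i]]_(m, n)) : conjM (- A) = - conjM A.
Proof. exact: (map_mxN conjc). Qed.

Lemma conjMZ m n (c : R[i]) (A : 'M[R[i]]_(m, n)) : conjM (c *: A) = c^*%C *: conjM A.
Proof. by apply/matrixP => a b; rewrite !mxE rmorphM. Qed.

Lemma conjM_tr m n (A : 'M[R[i]]_(m, n)) : conjM A^T = (conjM A)^T.
Proof. by apply/matrixP => a b; rewrite !mxE. Qed.

Lemma conjMK m n (A : 'M[R[i]]_(m, n)) : conjM (conjM A) = A.
Proof. by apply/matrixP => a b; rewrite !mxE conjcK. Qed.

End ConjugateMatrix.

Lemma strongly_adjoint_creal_witness (R : realType) n (X A : 'M[R[i]]_n)
    (u v : 'cV[R[i]]_n) :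
  A *m conjM A = 1%:M -> A *m conjM v + v = 0 ->
  A *m X = - (conjM X *m A) -> A *m u + conjM X *m v = - conjM u ->
  strongly_adjoint_creal (X, u).
Proof.
move=> AA_1 Av_v AX_XA Au_u.
have A_unit : A \in unitmx by case: (mulmx1_unit AA_1).
have AdX : A *m X *m invmx A = - conjM X.
  by rewrite AX_XA mulNmx -mulmxA mulmxV // mulmx1.
exists (A, v); split => //.
  by rewrite /aff_mul /aff_one /= AA_1 Av_v.
by rewrite /aff_Ad /= AdX mulNmx opprK Au_u.
Qed.

Lemma strongly_adjoint_creal0 (R : realType) (Y : 'M[R[i]]_0 * 'cV[R[i]]_0) :
  strongly_adjoint_creal Y.
Proof.
exists (1%:M, 0); split; rewrite ?unitmx1 // /aff_mul /aff_Ad /aff_one;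
  by congr (_, _); apply/matrixP => -[].
Qed.

Lemma sum_delta_ord (T : pzSemiRingType) N (F : 'I_N -> T) (k : nat) :
  \sum_(b < N) (k == b)%:R * F b = if insub k is Some b then F b else 0.
Proof.
case: insubP => [b _ kb | k_ge].
  rewrite (bigD1 b) //= -kb eqxx mul1r big1 ?addr0 // => b' b'b.
  by rewrite eq_sym (inj_eq val_inj) (negbTE b'b) mul0r.
rewrite big1 // => b _; case: eqP => [kb|]; last by rewrite mul0r.
by move: (ltn_ord b) k_ge; rewrite -kb => ->.
Qed.

Definition sign_diag_mx (R : realType) n (p : nat) : 'M[R[i]]_n :=
  diag_mx (\row_(k < n) (-1) ^+ (k + p)).

Section JordanBlock0.
Variables (R : realType) (n : nat).
Local Notation J := (jordan_block (0 : R[i]) n).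

Lemma jordan_block0E a b : J a b = (b == a.+1 :> nat)%:R.
Proof.
rewrite mxE; case: eqP => [->|_]; last by case: eqP.
by rewrite eqn_leq ltnn andbF.
Qed.

Lemma conjM_jordan_block0 : conjM J = J.
Proof. by apply/matrixP => a b; rewrite mxE !jordan_block0E rmorph_nat. Qed.

Lemma jordan_block0_mulE (w : 'cV[R[i]]_n) a :
  (J *m w) a 0 = if insub a.+1 is Some b then w b 0 else 0.
Proof.
by rewrite mxE -sum_delta_ord; apply: eq_bigr => b _; rewrite jordan_block0E eq_sym.
Qed.

Lemma tr_jordan_block0_mulE (y : 'cV[R[i]]_n) (a b : 'I_n) :
  b = a.+1 :> nat -> (J^T *m y) b 0 = y a 0.
Proof.
move=> ba; rewrite mxE (eq_bigr (fun c : 'I_n => (a == c :> nat)%:R * y c 0)).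
  by rewrite sum_delta_ord valK.
by move=> c _; rewrite mxE jordan_block0E ba eqSS.
Qed.

Section SignDiagonal.
Variable p : nat.
Local Notation S := (sign_diag_mx R n p).

Lemma sign_diag_mx_sqr : S *m S = 1%:M.
Proof.
apply/matrixP => a b; rewrite mul_diag_mx !mxE.
case: eqP => [->|_]; last by rewrite mulr0.
by rewrite -exprD -signr_odd oddD addbb.
Qed.

Lemma conjM_sign_diag_mx : conjM S = S.
Proof. by apply/matrixP => a b; rewrite !mxE rmorphMn rmorph_sign. Qed.

Lemma sign_diag_mx_jordan : S *m J = - (J *m S).
Proof.
apply/matrixP => a b; rewrite mul_diag_mx mul_mx_diag !(jordan_block0E, mxE).
case: eqP => [->|_]; last by rewrite mulr0 mul0r oppr0.
by rewrite mulr1 mul1r addSn exprS mulN1r opprK.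
Qed.

Lemma sign_diag_mx_tr_jordan : S *m J^T = - (J^T *m S).
Proof.
have := congr1 trmx sign_diag_mx_jordan.
by rewrite linearN /= !trmx_mul !tr_diag_mx => ->; rewrite opprK.
Qed.

End SignDiagonal.

End JordanBlock0.

Lemma jordan_block0_mul_tr (R : realType) n (y : 'cV[R[i]]_n.+1) :
  y ord_max 0 = 0 -> jordan_block 0 n.+1 *m ((jordan_block 0 n.+1)^T *m y) = y.
Proof.
move=> y_last; apply/matrixP => a j; rewrite ord1 jordan_block0_mulE.
case: insubP => [b _ ba | a_last]; first exact: tr_jordan_block0_mulE.
suff -> : a = ord_max by [].
by apply/val_inj/eqP; rewrite /= eqn_leq -ltnS ltn_ord leqNgt.
Qed.

Lemma exists_unimodular_conj_cancel (R : realType) (z : R[i]) :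
  exists2 c : R[i], c * c^*%C = 1 & z^*%C + c * z = 0.
Proof.
have [-> | z_neq0] := eqVneq z 0.
  by exists 1; rewrite ?conjc1 ?mulr1 // mulr0 conjc0 addr0.
have zc_neq0 : z^*%C != 0 by rewrite conjc_eq0.
exists (- z^*%C / z); last by rewrite divfK // subrr.
rewrite rmorphM rmorphN /= conjcK conjc_inv mulrACA mulrNN [_^-1 * _]mulrC mulrACA.
by rewrite !divff // mulr1.
Qed.

(* [z |-> A *m conjM z] is an involution, and the vector is minus the sum of
   [conjM x] and its image. *)
Lemma mulmx_conjM_orbit_sum (R : realType) n (A : 'M[R[i]]_n) (x : 'cV[R[i]]_n) :
  A *m conjM A = 1%:M ->
  A *m conjM (- (conjM x + A *m x)) = - (conjM x + A *m x).
Proof.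
move=> AA1; rewrite conjMN conjMD conjM_mul conjMK mulmxN mulmxDr mulmxA AA1 mul1mx.
by rewrite addrC.
Qed.

Theorem lemma3p4 (R : realType) (n : nat) (x : 'cV[R[i]]_n) :
  strongly_adjoint_creal (jordan_block 0 n, x).
Proof.
case: n x => [|n] x; first exact: strongly_adjoint_creal0.
have [c cc1 c_cancel] := exists_unimodular_conj_cancel (x ord_max 0).
(* The offset [n] makes the last diagonal entry of [S] equal to 1. *)
set J := jordan_block 0 n.+1; set S := sign_diag_mx R n.+1 n.
pose A := c *: S; pose y := - (conjM x + A *m x).
have AA1 : A *m conjM A = 1%:M.
  rewrite conjMZ conjM_sign_diag_mx -scalemxAl -scalemxAr sign_diag_mx_sqr.
  by rewrite scalerA cc1 scale1r.
have AJ : A *m J = - (J *m A).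
  by rewrite -scalemxAl sign_diag_mx_jordan -scalemxAr scalerN.
have AJt : A *m J^T = - (J^T *m A).
  by rewrite -scalemxAl sign_diag_mx_tr_jordan -scalemxAr scalerN.
have y_last : y ord_max 0 = 0.
  rewrite /y /A -scalemxAl mul_diag_mx !mxE /= -signr_odd oddD addbb expr0 mul1r.
  by rewrite c_cancel oppr0.
apply: (@strongly_adjoint_creal_witness _ _ _ A _ (J^T *m y)) => //.
- rewrite conjM_mul conjM_tr conjM_jordan_block0 mulmxA AJt mulNmx -mulmxA.
  by rewrite mulmx_conjM_orbit_sum // addNr.
- by rewrite conjM_jordan_block0.
- by rewrite conjM_jordan_block0 jordan_block0_mul_tr // /y opprD addrCA subrr addr0.
Qed.
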